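(* The set function $\mu^*$ has the following properties. (i) Monotonicity: if $A \subseteq B \subseteq \Omega$ then $\mu^*(A) \le \mu^*(B)$. (ii) Countable subadditivity: for any sequence of sets $A_n \subseteq \Omega$, $n \in \mathbb{N}$, one has $\mu^*\big(\bigcup_{n\in\mathbb{N}} A_n\big) \le \sum_{n\in\mathbb{N}} \mu^*(A_n)$. (iii) Singletons: if $\mathcal{P} = \{\mathbb{P}\}$ consists of a single probability measure, then $\mu^*(A) = \mathbb{P}(A)$ for every $A \in \mathcal{F}$. In particular (since $\mu^*(\emptyset)=0$), $\mu^*$ is an outer measure on $\Omega$.
   Context: Standing setup: $(\Omega, (\mathcal{F}_t)_{t\in\mathbb{N}_0}, \mathcal{F})$ is a filtered measurable space with $\mathcal{F} = \sigma\big(\bigcup_{t} \mathcal{F}_t\big)$. A stopping time is a map $\tau:\Omega\to\mathbb{N}_0\cup\{\infty\}$ with $\{\tau \le t\}\in\mathcal{F}_t$ for all $t$; $\mathcal{T}$ denotes the set of all stopping times. $\mathcal{P}$ is an arbitrary family of probability measures on $\mathcal{F}$. The inverse-capital measure is the $[0,1]$-valued set function defined for every $A\subseteq\Omega$ by $$\mu^*(A) = \inf_{\tau\in\mathcal{T}:\, A\subseteq\{\tau<\infty\}} \ \sup_{\mathbb{P}\in\mathcal{P}} \mathbb{P}(\tau<\infty).$$ *)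

From HB Require Import structures.
From mathcomp Require Import all_boot all_order all_algebra.
From mathcomp Require Import all_classical all_reals all_analysis.
Set Implicit Arguments. Unset Strict Implicit. Unset Printing Implicit Defensive.
Import Order.TTheory GRing.Theory Num.Theory.
Local Open Scope classical_set_scope.
Local Open Scope ring_scope.

(** Stopping times take values in N_0 ∪ {∞}, encoded as [option nat]
    ([Some t] = time t, [None] = ∞). *)
Section InverseCapital.
Context {T : Type}.

Definition tau_le (tau : T -> option nat) (t : nat) : set T :=
  [set w | exists s, tau w = Some s /\ (s <= t)%N].

Definition tau_fin (tau : T -> option nat) : set T :=
  [set w | exists s, tau w = Some s].

Definition stopping_time (Ft : nat -> set (set T)) (tau : T -> option nat) :=
  forall t, Ft t (tau_le tau t).

End InverseCapital.

Section MuStar.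
Context {d : measure_display} {T : measurableType d} {R : realType}.

(** sup_{P in Pfam} P(B), taken in [0,1] (so the sup of the empty family is 0) *)
Definition sup_prob (Pfam : set (probability T R)) (B : set T) : \bar R :=
  ereal_sup ([set 0%E] `|` [set P B | P in Pfam]).

Definition mu_star (Ft : nat -> set (set T)) (Pfam : set (probability T R))
    (A : set T) : \bar R :=
  ereal_inf [set sup_prob Pfam (tau_fin tau) |
             tau in [set tau | stopping_time Ft tau /\ A `<=` tau_fin tau]].

End MuStar.

From HB Require Import structures.
From mathcomp Require Import all_boot all_order all_algebra.
From mathcomp Require Import all_classical all_reals all_analysis.
Import Order.TTheory GRing.Theory Num.Theory.
Local Open Scope classical_set_scope.
Local Open Scope ring_scope.
Set Implicit Arguments. Unset Strict Implicit. Unset Printing Implicit Defensive.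

(* Stopping times are closed under
   countable infima, and {inf_n tau_n < oo} is the union of the {tau_n < oo};
   taking near-optimal tau_n for the sets A_n gives countable subadditivity.
   For a single P, the bound mu_star(A) >= P(A) is monotonicity of P;
   conversely, P is the Caratheodory extension of its restriction to the
   algebra \bigcup_t F_t, so A is covered, up to eps, by countably many sets
   F_k in F_(t_k), and the first t at which omega lies in some F_k belonging
   to F_t is a stopping time finite exactly on the union of the F_k. *)

(* The closure proofs are parameters only to give the instances below a key. *)
Definition ring_of_sets_on d (T : measurableType d) (G : set (set T))
  (G0 : G set0) (GU : setU_closed G) (GD : setD_closed G) : Type := T.

Section ring_of_sets_on.
Context d (T : measurableType d) (G : set (set T))
  (G0 : G set0) (GU : setU_closed G) (GD : setD_closed G).

HB.instance Definition _ := Pointed.copy (ring_of_sets_on G0 GU GD) T.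
HB.instance Definition _ :=
  @isRingOfSets.Build d (ring_of_sets_on G0 GU GD) G G0 GU GD.

End ring_of_sets_on.

Definition restr_measure d (T : measurableType d) (G : set (set T))
    (G0 : G set0) (GU : setU_closed G) (GD : setD_closed G)
    (R : realType) (mu : {measure set T -> \bar R}) (GT : G `<=` measurable) :
  set (ring_of_sets_on G0 GU GD) -> \bar R := mu.
Arguments restr_measure {d T G} G0 GU GD {R} mu GT.

Section restr_measure.
Context d (T : measurableType d) (G : set (set T))
  (G0 : G set0) (GU : setU_closed G) (GD : setD_closed G)
  (R : realType) (mu : {measure set T -> \bar R}) (GT : G `<=` measurable).
Local Open Scope ereal_scope.

Let restr_measure0 : restr_measure G0 GU GD mu GT set0 = 0.
Proof. exact: measure0. Qed.

Let restr_measure_ge0 A : 0 <= restr_measure G0 GU GD mu GT A.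
Proof. exact: measure_ge0. Qed.

Let restr_measure_semi_sigma_additive :
  semi_sigma_additive (restr_measure G0 GU GD mu GT).
Proof.
move=> F GF tF GUF.
by apply: measure_semi_sigma_additive => // [i|]; apply: GT;
  [exact: GF|exact: GUF].
Qed.

HB.instance Definition _ := isMeasure.Build _ _ _ (restr_measure G0 GU GD mu GT)
  restr_measure0 restr_measure_ge0 restr_measure_semi_sigma_additive.

End restr_measure.

Section outer_cover.
Context d (T : measurableType d) (R : realType) (G : set (set T))
  (G0 : G set0) (GU : setU_closed G) (GD : setD_closed G)
  (GT : G setT) (HG : measurable = <<s G >>).
Local Open Scope ereal_scope.

Let G_measurable : G `<=` measurable.
Proof. by rewrite HG; exact: sub_gen_smallest. Qed.

Lemma finite_measure_outer_cover (mu : {finite_measure set T -> \bar R})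
    (A : set T) (eps : R) : measurable A -> (0 < eps)%R ->
  exists F : (set T)^nat, [/\ forall k, G (F k), A `<=` \bigcup_k F k &
    mu (\bigcup_k F k) <= mu A + eps%:E].
Proof.
move=> mA eps_gt0.
pose nu := restr_measure G0 GU GD mu G_measurable.
pose embed : T -> g_sigma_algebraType (@measurable _ (ring_of_sets_on G0 GU GD))
  := id.
have mu_extE : mu_ext nu A = mu A.
  apply: (@measure_extension_unique _ _ _ nu _ (pushforward mu embed)) => //.
  - exists (fun=> setT); first by rewrite bigcup_const.
    by move=> _; split => //; rewrite /nu /restr_measure ltey_eq fin_num_measure.
  - by move=> _ Y mY; rewrite setTI HG.
  - by move: mA; rewrite HG.
have : mu_ext nu A < mu A + eps%:E.
  by rewrite mu_extE lteDl ?lte_fin// fin_num_measure.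
case/ereal_inf_lt => _ [F [GF AF] <-] lt_sum; exists F; split => //.
apply: le_trans (ltW lt_sum).
have GFm k : measurable (F k : set T) by exact: G_measurable (GF k).
by apply: measure_sigma_subadditive => //; exact: bigcupT_measurable.
Qed.

End outer_cover.

Definition first_hit {T : Type} (D : nat -> set T) (w : T) : option nat :=
  match pselect (exists t, `[< D t w >]) with
  | left h => Some (ex_minn h)
  | right _ => None
  end.

Section first_hit.
Context {T : Type} (D : nat -> set T).

Lemma tau_fin_first_hit : tau_fin (first_hit D) = \bigcup_t D t.
Proof.
apply/seteqP; split => w; rewrite /tau_fin /first_hit /=.
- case: pselect => [h _|_ []//].
  by case: (ex_minnP h) => m /asboolP Dm _; exists m.
- case=> t _ Dtw; case: pselect => [h|]; first by exists (ex_minn h).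
  by case; exists t; apply/asboolP.
Qed.

Lemma tau_le_first_hit : (forall s t, (s <= t)%N -> D s `<=` D t) ->
  forall t, tau_le (first_hit D) t = D t.
Proof.
move=> D_incr t; apply/seteqP; split => w; rewrite /tau_le /first_hit /=.
- case=> s []; case: pselect => // h [<-].
  by case: (ex_minnP h) => m /asboolP Dm _ mt; exact: D_incr mt _ Dm.
- move=> Dtw; case: pselect => [h|]; last by case; exists t; apply/asboolP.
  exists (ex_minn h); split => //.
  by case: (ex_minnP h) => m _; apply; apply/asboolP.
Qed.

End first_hit.

Lemma tau_finE {T : Type} (tau : T -> option nat) :
  tau_fin tau = \bigcup_t tau_le tau t.
Proof.
apply/seteqP; split => w /=.
- by case=> s tau_w; exists s => //; exists s.
- by case=> t _ [s [tau_w _]]; exists s.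
Qed.

Section filtration.
Context {T : pointedType} (Ft : nat -> set (set T))
  (Ft_sigma : forall t, sigma_algebra setT (Ft t))
  (Ft_incr : forall s t, (s <= t)%N -> Ft s `<=` Ft t).

Let FtE t : (Ft t).-sigma.-measurable = Ft t.
Proof. exact: measurable_g_measurableTypeE. Qed.

Lemma filtration_set0 t : Ft t set0.
Proof. by rewrite -FtE. Qed.

Lemma filtration_setT t : Ft t setT.
Proof. by rewrite -FtE. Qed.

Lemma filtration_countable_bigcup (I : countType) (P : set I)
    (F : I -> set T) t :
  (forall i, P i -> Ft t (F i)) -> Ft t (\bigcup_(i in P) F i).
Proof.
rewrite -FtE bigcup_mkcond => FtF.
apply: countable_bigcupT_measurable => // i.
by case: ifPn => // /set_mem /FtF; rewrite -FtE.
Qed.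

Lemma bigcup_filtration_setU : setU_closed (\bigcup_t Ft t).
Proof.
move=> A B [s _ FsA] [t _ FtB]; exists (maxn s t) => //; rewrite -FtE.
apply: measurableU; rewrite FtE.
- exact: Ft_incr (leq_maxl s t) _ FsA.
- exact: Ft_incr (leq_maxr s t) _ FtB.
Qed.

Lemma bigcup_filtration_setD : setD_closed (\bigcup_t Ft t).
Proof.
move=> A B [s _ FsA] [t _ FtB]; exists (maxn s t) => //; rewrite -FtE.
apply: measurableD; rewrite FtE.
- exact: Ft_incr (leq_maxl s t) _ FsA.
- exact: Ft_incr (leq_maxr s t) _ FtB.
Qed.

Lemma adapted_stopping_time (I : countType) (F : I -> set T) :
  (forall i, exists t, Ft t (F i)) ->
  exists2 tau, stopping_time Ft tau & tau_fin tau = \bigcup_i F i.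
Proof.
move=> F_adapted.
pose D t := \bigcup_(i in [set i | Ft t (F i)]) F i.
have D_incr s t : (s <= t)%N -> D s `<=` D t.
  by move=> st w [i /= FsFi Fiw]; exists i => //; exact: Ft_incr st _ FsFi.
exists (first_hit D).
  by move=> t; rewrite tau_le_first_hit //; exact: filtration_countable_bigcup.
rewrite tau_fin_first_hit; apply/seteqP; split => w.
- by case=> t _ [i _ Fiw]; exists i.
- by case=> i _ Fiw; have [t FtFi] := F_adapted i; exists t => //; exists i.
Qed.

Lemma stopping_time_bigcup (I : countType) (tau : I -> T -> option nat) :
  (forall i, stopping_time Ft (tau i)) ->
  exists2 sigma, stopping_time Ft sigma &
    tau_fin sigma = \bigcup_i tau_fin (tau i).
Proof.
move=> tau_st.
have -> : \bigcup_i tau_fin (tau i) = \bigcup_(p : I * nat) tau_le (tau p.1) p.2.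
  apply/seteqP; split => w.
  - by case=> i _; rewrite tau_finE => -[t _ tau_w]; exists (i, t).
  - by case=> -[i t] _ /= tau_w; exists i => //; rewrite tau_finE; exists t.
by apply: adapted_stopping_time => -[i t]; exists t; exact: tau_st.
Qed.

End filtration.

Section sup_prob.
Context {d : measure_display} {T : measurableType d} {R : realType}
  (Pfam : set (probability T R)).
Local Open Scope ereal_scope.

Lemma sup_prob_ge0 B : 0 <= sup_prob Pfam B.
Proof. by apply: ereal_sup_ubound; left. Qed.

Lemma sup_prob_ub B P : Pfam P -> P B <= sup_prob Pfam B.
Proof. by move=> PfamP; apply: ereal_sup_ubound; right; exists P. Qed.

Lemma sup_prob_le B x : 0 <= x -> (forall P, Pfam P -> P B <= x) ->
  sup_prob Pfam B <= x.
Proof.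
by move=> x_ge0 PBx; apply: ge_ereal_sup => _ [->//|[P PfamP <-]]; exact: PBx.
Qed.

End sup_prob.

Section mu_star.
Context {d : measure_display} {T : measurableType d} {R : realType}
  (Ft : nat -> set (set T)) (Pfam : set (probability T R)).
Local Open Scope ereal_scope.

Lemma mu_star_lbound A tau : stopping_time Ft tau -> A `<=` tau_fin tau ->
  mu_star Ft Pfam A <= sup_prob Pfam (tau_fin tau).
Proof. by move=> st_tau A_tau; apply: ereal_inf_lbound; exists tau. Qed.

Lemma mu_star_glb A x :
  (forall tau, stopping_time Ft tau -> A `<=` tau_fin tau ->
    x <= sup_prob Pfam (tau_fin tau)) ->
  x <= mu_star Ft Pfam A.
Proof.
by move=> x_lb; apply: le_ereal_inf_tmp => _ [tau [st_tau A_tau] <-]; exact: x_lb.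
Qed.

Lemma mu_star_lt A x : mu_star Ft Pfam A < x ->
  exists tau, [/\ stopping_time Ft tau, A `<=` tau_fin tau &
                  sup_prob Pfam (tau_fin tau) < x].
Proof. by case/ereal_inf_lt => _ [tau [st_tau A_tau] <-] lt_x; exists tau. Qed.

Lemma mu_star_ge0 A : 0 <= mu_star Ft Pfam A.
Proof. by apply: mu_star_glb => *; exact: sup_prob_ge0. Qed.

Lemma le_mu_star A B : A `<=` B -> mu_star Ft Pfam A <= mu_star Ft Pfam B.
Proof.
move=> AB; apply: mu_star_glb => tau st_tau B_tau.
by apply: mu_star_lbound st_tau _; exact: subset_trans AB B_tau.
Qed.

Section filtration.
Hypotheses (Ft_sigma : forall t, sigma_algebra setT (Ft t))
  (Ft_incr : forall s t, (s <= t)%N -> Ft s `<=` Ft t).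

Lemma mu_star_le_adapted_cover A (I : countType) (F : I -> set T) :
  (forall i, exists t, Ft t (F i)) -> A `<=` \bigcup_i F i ->
  mu_star Ft Pfam A <= sup_prob Pfam (\bigcup_i F i).
Proof.
move=> F_adapted AF.
have [tau st_tau tauE] := adapted_stopping_time Ft_sigma Ft_incr F_adapted.
by rewrite -tauE; apply: mu_star_lbound; rewrite ?tauE.
Qed.

Lemma mu_star_le1 A : mu_star Ft Pfam A <= 1.
Proof.
apply: (@le_trans _ _ (sup_prob Pfam (\bigcup_(_ : unit) setT))).
  apply: mu_star_le_adapted_cover => [_|w _]; last by exists tt.
  by exists 0%N; exact: filtration_setT.
apply: sup_prob_le => // P _.
by rewrite bigcup_const ?probability_setT//; exists tt.
Qed.

Lemma mu_star0 : mu_star Ft Pfam set0 = 0.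
Proof.
apply/eqP; rewrite eq_le mu_star_ge0 andbT.
apply: (@le_trans _ _ (sup_prob Pfam (\bigcup_(_ : unit) set0))).
  apply: mu_star_le_adapted_cover => [_|//].
  by exists 0%N; exact: filtration_set0.
apply: sup_prob_le => // P _.
by rewrite bigcup_const ?measure0//; exists tt.
Qed.

End filtration.
End mu_star.

Section inverse_capital.
Context (d : measure_display) (T : measurableType d) (R : realType)
  (Ft : nat -> set (set T))
  (Ft_sigma : forall t, sigma_algebra setT (Ft t))
  (Ft_incr : forall s t, (s <= t)%N -> Ft s `<=` Ft t)
  (HF : measurable = <<s \bigcup_t Ft t >>)
  (Pfam : set (probability T R)).
Local Open Scope ereal_scope.

Let filtration_measurable t : Ft t `<=` measurable.
Proof. by move=> X FtX; rewrite HF; apply: sub_gen_smallest; exists t. Qed.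

Let tau_fin_measurable tau : stopping_time Ft tau -> measurable (tau_fin tau).
Proof.
move=> st_tau; rewrite tau_finE; apply: bigcupT_measurable => t.
exact: filtration_measurable (st_tau t).
Qed.

Lemma mu_star_sigma_subadditive (A : (set T)^nat) :
  mu_star Ft Pfam (\bigcup_n A n) <= \sum_(n <oo) mu_star Ft Pfam (A n).
Proof.
apply/lee_addgt0Pr => e e_gt0.
pose e_ n := (e / (2 ^ n.+1)%:R)%R.
have /choice[tau /all_and3[tau_st A_tau tau_lt]] : forall n, exists tau,
    [/\ stopping_time Ft tau, A n `<=` tau_fin tau &
        sup_prob Pfam (tau_fin tau) < mu_star Ft Pfam (A n) + (e_ n)%:E].
  move=> n; apply: mu_star_lt.
  rewrite lteDl ?lte_fin ?divr_gt0 ?ltr0n ?expn_gt0// ge0_fin_numE ?mu_star_ge0//.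
  exact: le_lt_trans (mu_star_le1 Pfam Ft_sigma Ft_incr (A n)) (ltry 1).
have [sigma st_sigma sigmaE] := stopping_time_bigcup Ft_sigma Ft_incr tau_st.
apply: le_trans (mu_star_lbound _ st_sigma _) _.
  by rewrite sigmaE => w [n _ Anw]; exists n => //; exact: A_tau.
apply: sup_prob_le => [|P PfamP].
  apply: adde_ge0; last by rewrite lee_fin ltW.
  by apply: nneseries_ge0 => n _ _; exact: mu_star_ge0.
rewrite sigmaE.
apply: le_trans (epsilon_trick _ (fun n => mu_star_ge0 _ _ (A n)) (ltW e_gt0)).
have tau_fin_m n : measurable (tau_fin (tau n)) by exact: tau_fin_measurable.
apply: le_trans (measure_sigma_subadditive P tau_fin_m _ _) _ => //.
  exact: bigcupT_measurable.
apply: lee_nneseries => [n _ _|n _]; first exact: measure_ge0.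
by apply: le_trans (ltW (tau_lt n)); exact: sup_prob_ub.
Qed.

Lemma mu_star_probability (P : probability T R) : Pfam = [set P] ->
  forall A, measurable A -> mu_star Ft Pfam A = P A.
Proof.
move=> PfamE A mA; apply/eqP; rewrite eq_le; apply/andP; split; last first.
  apply: mu_star_glb => tau st_tau A_tau.
  apply: le_trans (sup_prob_ub _ (P:=P) _); last by rewrite PfamE.
  by apply: le_measure A_tau; rewrite inE //; exact: tau_fin_measurable.
apply/lee_addgt0Pr => e e_gt0.
have G0 : (\bigcup_t Ft t) set0 by exists 0%N => //; exact: filtration_set0.
have GT : (\bigcup_t Ft t) setT by exists 0%N => //; exact: filtration_setT.
have [F [GF AF PF]] := finite_measure_outer_cover G0
  (bigcup_filtration_setU Ft_sigma Ft_incr)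
  (bigcup_filtration_setD Ft_sigma Ft_incr) GT HF P mA e_gt0.
apply: le_trans (mu_star_le_adapted_cover Pfam Ft_sigma Ft_incr _ AF) _.
  by move=> k; have [t _ FtFk] := GF k; exists t.
apply: sup_prob_le => [|Q]; last by rewrite PfamE => ->.
by apply: adde_ge0; [exact: measure_ge0|rewrite lee_fin ltW].
Qed.

End inverse_capital.

Theorem mainTheorem1 (d : measure_display) (T : measurableType d) (R : realType)
    (Ft : nat -> set (set T))
    (HFt_sigma : forall t, sigma_algebra setT (Ft t))
    (HFt_incr : forall s t, (s <= t)%N -> Ft s `<=` Ft t)
    (HF : measurable = <<s \bigcup_t Ft t >>)
    (Pfam : set (probability T R)) :
  [/\ (forall A B : set T, A `<=` B ->
         (mu_star Ft Pfam A <= mu_star Ft Pfam B)%E),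
      (forall A : (set T)^nat,
         (mu_star Ft Pfam (\bigcup_n A n) <= \sum_(n <oo) mu_star Ft Pfam (A n))%E),
      (forall P : probability T R, Pfam = [set P] ->
         forall A : set T, measurable A -> mu_star Ft Pfam A = P A),
      (forall A : set T, (0 <= mu_star Ft Pfam A)%E /\ (mu_star Ft Pfam A <= 1)%E) &
      mu_star Ft Pfam set0 = 0%E].
Proof.
split.
- exact: le_mu_star.
- exact: mu_star_sigma_subadditive.
- exact: mu_star_probability.
- by move=> A; split; [exact: mu_star_ge0|exact: mu_star_le1].
- exact: mu_star0.
Qed.
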